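(* Let $R$ be a commutative ring, $n\ge2$, and $\varepsilon\in{\rm E}_{2n}(R)$. Then there exists $\rho\in{\rm E}_{\psi_n}(R)$ such that $(1\perp\rho)\,\varepsilon\in{\rm ESp}_{2n}(R)$.
   Context: All rings are commutative with identity. ${\rm E}_m(R)$ is the subgroup of ${\rm SL}_m(R)$ generated by $E_{ij}(\lambda)=I_m+\lambda e_{ij}$ ($i\neq j$). $\psi_n=\sum_{i=1}^n e_{2i-1,2i}-\sum_{i=1}^n e_{2i,2i-1}$. $1\perp\rho$ denotes $\begin{pmatrix}1&0\\0&\rho\end{pmatrix}$. Let $\sigma$ be the permutation with $\sigma(2i)=2i-1$, $\sigma(2i-1)=2i$. For $z\in R$, $1\le i\ne j\le 2n$, set $se_{ij}(z)=I_{2n}+ze_{ij}$ if $i=\sigma(j)$, and $se_{ij}(z)=I_{2n}+ze_{ij}-(-1)^{i+j}ze_{\sigma(j)\sigma(i)}$ if $i\ne\sigma(j)$. ${\rm ESp}_{2n}(R)$ is the subgroup of ${\rm GL}_{2n}(R)$ generated by all $se_{ij}(z)$ (it is contained in $\{\alpha:\alpha^t\psi_n\alpha=\psi_n\}$). Elements of $R^m$ are row vectors, ${}^t$ is transpose. For an invertible alternating (of the form $\nu-\nu^t$) $2n\times2n$ matrix $\varphi$ write $\varphi=\begin{pmatrix}0&-c\\ c^t&\nu\end{pmatrix}$, $\varphi^{-1}=\begin{pmatrix}0&d\\ -d^t&\mu\end{pmatrix}$ with $c,d\in R^{2n-1}$, and set $\alpha_\varphi(v)=I_{2n-1}+d^tv\nu$,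 $\beta_\varphi(v)=I_{2n-1}+\mu v^tc$; ${\rm E}_\varphi(R)$ is the subgroup of ${\rm GL}_{2n-1}(R)$ generated by all $\alpha_\varphi(v),\beta_\varphi(v)$, $v\in R^{2n-1}$. *)

From HB Require Import structures.
From mathcomp Require Import all_boot all_order all_algebra.
Set Implicit Arguments. Unset Strict Implicit. Unset Printing Implicit Defensive.
Import GRing.Theory.
Local Open Scope ring_scope.

(* Indices are 0-based: the paper's index i (1-based) is our i-1.
   Parities of i+j are unchanged by the shift. *)

Inductive gen_grp (R : comPzRingType) (N : nat) (S : 'M[R]_N -> Prop)
  : 'M[R]_N -> Prop :=
| gen_one : gen_grp S 1%:M
| gen_mul s g : S s -> gen_grp S g -> gen_grp S (s *m g)
| gen_mulinv s s' g : S s -> s *m s' = 1%:M -> s' *m s = 1%:M ->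
    gen_grp S g -> gen_grp S (s' *m g).

Definition elem (R : comPzRingType) N (i j : 'I_N) (l : R) : 'M[R]_N :=
  1%:M + l *: delta_mx i j.

Definition E_grp (R : comPzRingType) N (A : 'M[R]_N) : Prop :=
  gen_grp (fun s => exists (i j : 'I_N) (l : R), i != j /\ s = elem i j l) A.

Definition psi (R : comPzRingType) N : 'M[R]_N :=
  \matrix_(k, l) (if ~~ odd k && (l == k.+1 :> nat) then 1
                  else if odd k && (l.+1 == k :> nat) then -1 else 0).

Definition sgm (k : nat) : nat := if odd k then k.-1 else k.+1.

Definition se (R : comPzRingType) N (i j : 'I_N) (z : R) : 'M[R]_N :=
  \matrix_(k, l)
    ((k == l)%:R + (if (k == i) && (l == j) then z else 0)
     - (if (i : nat) == sgm j then 0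
        else if ((k : nat) == sgm j) && ((l : nat) == sgm i)
             then (-1) ^+ (i + j) * z else 0)).

Definition ESp_grp (R : comPzRingType) N (A : 'M[R]_N) : Prop :=
  gen_grp (fun s => exists (i j : 'I_N) (z : R), i != j /\ s = se i j z) A.

(* For phi = [[0, -c],[c^t, nu]] and phi^{-1} = psi' = [[0, d],[-d^t, mu]] *)
Definition alpha_phi (R : comPzRingType) m (phi phiinv : 'M[R]_(1 + m))
  (v : 'rV[R]_m) : 'M[R]_m :=
  1%:M + (ursubmx phiinv)^T *m v *m drsubmx phi.

Definition beta_phi (R : comPzRingType) m (phi phiinv : 'M[R]_(1 + m))
  (v : 'rV[R]_m) : 'M[R]_m :=
  1%:M + drsubmx phiinv *m v^T *m (- ursubmx phi).

(* E_phi(R): generated by alpha_phi(v), beta_phi(v), where phiinv is the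
   (unique) inverse of phi. *)
Definition E_phi (R : comPzRingType) m (phi : 'M[R]_(1 + m)) (A : 'M[R]_m) : Prop :=
  gen_grp (fun s => exists phiinv : 'M[R]_(1 + m),
             phi *m phiinv = 1%:M /\ phiinv *m phi = 1%:M /\
             exists v, s = alpha_phi phi phiinv v \/ s = beta_phi phi phiinv v) A.

Definition perp1 (R : comPzRingType) m (rho : 'M[R]_m) : 'M[R]_(1 + m) :=
  block_mx 1%:M 0 0 rho.

From HB Require Import structures.
From mathcomp Require Import all_boot all_order all_algebra zify ring.
Set Implicit Arguments. Unset Strict Implicit. Unset Printing Implicit Defensive.
Import GRing.Theory.
Local Open Scope ring_scope.

(* Every elementary matrix is some E_0j(l), E_i0(l), or a commutator of those,
   so it suffices that the set of products (1 _|_ tau) s with tau in E_psi and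
   s in ESp ([decomposable]) is stable under left multiplication by
   Xr w = 1 + e_0 w and Xc u = 1 + u e_0^T with w_0 = u_0 = 0.  Since 1 _|_ tau
   fixes e_0, it can be moved to the left without changing the shape of Xr w
   or Xc u, so only these need to be decomposed.  The symplectic matrix Xsp w,
   a product of matrices se_0k(z), has the same first row as Xr w and differs from
   it by a factor 1 + g e_1^T with g_0 = g_1 = 0.  That factor is
   1 _|_ beta_psi(v) for a suitable v, because the lower right block nu of psi
   squares to a matrix unit minus the identity.  Xc u is handled by
   transposition. *)

Lemma sgmK : involutive sgm.
Proof. by move=> [|k]; rewrite /sgm //=; case: (boolP (odd k)) => [|/negbTE] hk /=; rewrite ?negbK hk. Qed.

Lemma odd_sgm k : odd (sgm k) = ~~ odd k.
Proof. by rewrite /sgm; case: ifP => [|/= ->] //; case: k => [|k] //= /negbTE. Qed.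

Lemma sgm_inj : injective sgm.
Proof. exact: inv_inj sgmK. Qed.

Lemma sgm_neq k : (sgm k == k) = false.
Proof. by apply/negbTE/eqP => /(congr1 odd); rewrite odd_sgm; case: (odd k). Qed.

Lemma eq_sgmC k l : (k == sgm l) = (l == sgm k).
Proof. by rewrite -(inj_eq sgm_inj) sgmK eq_sym. Qed.

Lemma ltn_sgm n k : (k < n.*2)%N -> (sgm k < n.*2)%N.
Proof.
rewrite /sgm; case: ifP => [_|odd_k]; first lia.
have : k.+1 != n.*2.
  by apply: contraFN odd_k => /eqP/(congr1 odd); rewrite odd_double => /negbFE.
lia.
Qed.

Lemma gt1_sgm k : (1 < sgm k)%N = (1 < k)%N.
Proof. by rewrite /sgm; case: ifP; case: k => [|[|[|k]]]. Qed.

Lemma signr_sgm (R : pzRingType) k : (-1) ^+ sgm k = - (-1) ^+ k :> R.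
Proof. by rewrite -signr_odd odd_sgm -[(-1) ^+ k]signr_odd; case: (odd k); rewrite ?opprK. Qed.

Section GeneratedGroup.
Variables (R : comPzRingType) (N : nat).
Implicit Types (S T : 'M[R]_N -> Prop) (A B s : 'M[R]_N).

Lemma gen_grp_mul S A B : gen_grp S A -> gen_grp S B -> gen_grp S (A *m B).
Proof.
elim=> [|s A' Ss _ IH|s s' A' Ss ss' s's _ IH] GB; first by rewrite mul1mx.
  by rewrite -mulmxA; apply: gen_mul Ss (IH GB).
by rewrite -mulmxA; apply: gen_mulinv Ss ss' s's (IH GB).
Qed.

Lemma gen_grp_gen S s : S s -> gen_grp S s.
Proof. by move=> Ss; rewrite -[s]mulmx1; apply: gen_mul Ss (gen_one _). Qed.

Lemma gen_grp_gen_inv S s s' :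
  S s -> s *m s' = 1%:M -> s' *m s = 1%:M -> gen_grp S s'.
Proof. by move=> Ss ss' s's; rewrite -[s']mulmx1; apply: gen_mulinv Ss ss' s's (gen_one _). Qed.

Lemma gen_grp_inv S A :
  (forall s, S s -> exists s', s *m s' = 1%:M /\ s' *m s = 1%:M) ->
  gen_grp S A -> exists B, [/\ gen_grp S B, A *m B = 1%:M & B *m A = 1%:M].
Proof.
move=> invS; elim=> [|s A' Ss _ [B [GB AB BA]]|s s' A' Ss ss' s's _ [B [GB AB BA]]].
- by exists 1%:M; rewrite mulmx1; split=> //; apply: gen_one.
- have [s' [ss' s's]] := invS s Ss.
  exists (B *m s'); split; first exact: gen_grp_mul GB (gen_grp_gen_inv Ss ss' s's).
    by rewrite mulmxA -(mulmxA s) AB mulmx1.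
  by rewrite mulmxA -(mulmxA B) s's mulmx1.
- exists (B *m s); split; first exact: gen_grp_mul GB (gen_grp_gen Ss).
    by rewrite mulmxA -(mulmxA s') AB mulmx1.
  by rewrite mulmxA -(mulmxA B) ss' mulmx1.
Qed.

Lemma gen_grp_tr S T A :
  (forall s, S s -> T s^T) -> gen_grp S A -> gen_grp T A^T.
Proof.
move=> ST; elim=> [|s A' Ss _ IH|s s' A' Ss ss' s's _ IH].
- by rewrite trmx1; apply: gen_one.
- by rewrite trmx_mul; apply: gen_grp_mul IH (gen_grp_gen (ST _ Ss)).
- rewrite trmx_mul; apply: gen_grp_mul IH (gen_grp_gen_inv (ST _ Ss) _ _).
    by rewrite -trmx_mul s's trmx1.
  by rewrite -trmx_mul ss' trmx1.
Qed.

End GeneratedGroup.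

Lemma sum_kronecker_l (R : pzSemiRingType) n (F : 'I_n -> R) x :
  \sum_(c < n) (c == x)%:R * F c = F x.
Proof.
rewrite (bigD1 x) //= eqxx mul1r big1 ?addr0 // => c /negbTE ->.
by rewrite mul0r.
Qed.

Lemma sum_kronecker_r (R : pzSemiRingType) n (F : 'I_n -> R) x :
  \sum_(c < n) F c * (c == x)%:R = F x.
Proof.
rewrite (bigD1 x) //= eqxx mulr1 big1 ?addr0 // => c /negbTE ->.
by rewrite mulr0.
Qed.

Section Symplectic.
Variables (R : comPzRingType) (N : nat).

Lemma trmx_se (i j : 'I_N) (z : R) : (se i j z)^T = se j i z.
Proof.
apply/matrixP => k l; rewrite !mxE [l == k]eq_sym [(l == i) && _]andbC.
by rewrite [(i : nat) == _]eq_sgmC [(_ == sgm j) && _]andbC addnC.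
Qed.

Lemma ESp_se (i j : 'I_N) (z : R) : i != j -> ESp_grp (se i j z).
Proof. by move=> neq_ij; apply: gen_grp_gen; exists i, j, z. Qed.

Lemma ESp_tr (A : 'M[R]_N) : ESp_grp A -> ESp_grp A^T.
Proof.
apply: gen_grp_tr => _ [i [j [z [neq_ij ->]]]].
by exists j, i, z; rewrite trmx_se eq_sym.
Qed.

End Symplectic.

Section Elementary.
Variables (R : comPzRingType) (N : nat).
Implicit Types (i j k : 'I_N) (l : R).

Lemma elemK i j l : i != j -> elem i j l *m elem i j (- l) = 1%:M.
Proof.
move=> neq_ij; rewrite /elem !(mulmxDl, mulmxDr, mul1mx, mulmx1).
rewrite -!(scalemxAl, scalemxAr) mul_delta_mx_cond eq_sym (negbTE neq_ij).
by apply/matrixP => a b; rewrite !mxE; ring.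
Qed.

Lemma elem_commutator i j k l : i != j -> i != k -> j != k ->
  elem i j l = elem i k l *m (elem k j 1 *m (elem i k (- l) *m elem k j (-1))).
Proof.
move=> neq_ij neq_ik neq_jk; rewrite /elem.
rewrite !(mulmxDl, mulmxDr, mul1mx, mulmx1, mulmxA) -!(scalemxAl, scalemxAr).
rewrite !mul_delta_mx_cond (negbTE neq_jk) [j == i]eq_sym (negbTE neq_ij).
rewrite [k == i]eq_sym (negbTE neq_ik) eqxx !mulr0n !mul0mx !mulr1n.
rewrite !mul_delta_mx_cond (negbTE neq_jk) [j == i]eq_sym (negbTE neq_ij) !mulr0n !mul0mx.
by apply/matrixP => a b; rewrite !mxE; ring.
Qed.

End Elementary.

Section Perp1.
Variables (R : comPzRingType) (m : nat).
Implicit Types t : 'M[R]_m.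
Local Notation e0c := (delta_mx ord0 0 : 'cV[R]_(1 + m)).
Local Notation e0r := (delta_mx 0 ord0 : 'rV[R]_(1 + m)).

Lemma perp1_mul t t' : perp1 t *m perp1 t' = perp1 (t *m t').
Proof. by rewrite /perp1 mulmx_block !(mulmx0, mul0mx, mulmx1, addr0, add0r). Qed.

Lemma perp1_1 : perp1 (1%:M : 'M[R]_m) = 1%:M.
Proof. by rewrite /perp1 -scalar_mx_block. Qed.

Lemma trmx_perp1 t : (perp1 t)^T = perp1 t^T.
Proof. by rewrite /perp1 tr_block_mx !trmx0 trmx1. Qed.

Lemma e0c_col : e0c = col_mx 1%:M 0.
Proof.
have -> : ord0 = lshift m (0 : 'I_1) by apply: val_inj.
rewrite (@delta_mx_ushift R 1 m 1 (0 : 'I_1)); congr col_mx.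
by apply/matrixP => i j; rewrite !mxE (ord1 i) (ord1 j).
Qed.

Lemma perp1_e0c t : perp1 t *m e0c = e0c.
Proof. by rewrite e0c_col mul_block_col !(mulmx0, mul0mx, mulmx1, addr0). Qed.

Lemma e0r_perp1 t : e0r *m perp1 t = e0r.
Proof. by rewrite -[LHS]trmxK trmx_mul trmx_perp1 trmx_delta perp1_e0c trmx_delta. Qed.

Lemma perp1_row00 (w : 'rV[R]_(1 + m)) t : (w *m perp1 t) 0 ord0 = w 0 ord0.
Proof.
transitivity (col ord0 (w *m perp1 t) 0 0); first by rewrite [RHS]mxE.
by rewrite colE -mulmxA perp1_e0c -colE [LHS]mxE.
Qed.

Lemma perp1_col00 (u : 'cV[R]_(1 + m)) t : (perp1 t *m u) ord0 0 = u ord0 0.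
Proof.
transitivity ((u^T *m perp1 t^T) 0 ord0); first by rewrite -trmx_perp1 -trmx_mul [RHS]mxE.
by rewrite perp1_row00 mxE.
Qed.

End Perp1.

Section StandardForm.
Variables (R : comPzRingType) (q : nat).
Local Notation m := q.*2.+1.
Local Notation N := (1 + m).
Local Notation psi := (psi R N).
Local Notation nu := (drsubmx psi).
Local Notation e := (delta_mx 0 0 : 'rV[R]_m).

Definition sg (k : 'I_N) : 'I_N := Ordinal (@ltn_sgm q.+1 k (ltn_ord k)).

Lemma sgK : involutive sg.
Proof. by move=> k; apply: val_inj; rewrite /= sgmK. Qed.

Lemma eq_sgC k l : (k == sg l) = (l == sg k).
Proof. by rewrite -!val_eqE /= eq_sgmC. Qed.

Lemma sg_neq k : (sg k == k) = false.
Proof. by rewrite -val_eqE /= sgm_neq. Qed.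

Lemma psiE k l : psi k l = (l == sg k)%:R * (-1) ^+ k.
Proof.
rewrite mxE -val_eqE /= /sgm -[(-1) ^+ k]signr_odd; case odd_k: (odd k) => /=.
  by case: k odd_k => [[|k]] //= _ _; rewrite eqSS; case: eqP; rewrite ?mul1r ?mul0r.
by case: eqP; rewrite ?mul1r ?mul0r.
Qed.

Lemma trmx_psi : psi^T = - psi.
Proof.
apply/matrixP => k l; rewrite [LHS]mxE [RHS]mxE !psiE eq_sgC.
by case: eqP => [->|_]; rewrite ?signr_sgm ?mul1r // !mul0r oppr0.
Qed.

Lemma psi_sqr : psi *m psi = - 1%:M.
Proof.
apply/matrixP => k l; rewrite [LHS]mxE [RHS]mxE.
under eq_bigr do rewrite !psiE -mulrA.
rewrite sum_kronecker_l sgK signr_sgm !mulrN mulrCA -exprD addnn -signr_odd odd_double.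
by rewrite mulr1 mxE eq_sym.
Qed.

Lemma psi_block : psi = block_mx 0 e (- e^T) nu.
Proof.
(* [lock] keeps [mxE] from unfolding the entries of psi. *)
have ur : ursubmx psi = e.
  apply/matrixP => i j; rewrite [psi]lock !mxE -lock psiE (ord1 i) expr0 mulr1.
  by rewrite -!val_eqE.
have ul : ulsubmx psi = 0.
  by apply/matrixP => i j; rewrite [psi]lock !mxE -lock psiE (ord1 i) (ord1 j) -val_eqE mul0r.
have dl : dlsubmx psi = - e^T.
  by rewrite -ur trmx_ursub trmx_psi; apply/matrixP => i j; rewrite !mxE opprK.
by rewrite -dl -ur -ul submxK.
Qed.

Lemma trmx_nu : nu^T = - nu.
Proof. by rewrite trmx_drsub trmx_psi; apply/matrixP => i j; rewrite !mxE. Qed.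

Lemma nu_mul_tr_e : nu *m e^T = 0.
Proof.
have := psi_sqr; rewrite [in LHS]psi_block mulmx_block scalar_mx_block opp_block_mx.
case/eq_block_mx => _ _ + _; rewrite mulmx0 add0r mulmxN oppr0 => /eqP.
by rewrite oppr_eq0 => /eqP.
Qed.

Lemma nu_sqr : nu *m nu = e^T *m e - 1%:M.
Proof.
have := psi_sqr; rewrite [in LHS]psi_block mulmx_block scalar_mx_block opp_block_mx.
by case/eq_block_mx => _ _ _; rewrite mulNmx => /(canRL (addNKr _)).
Qed.

Local Notation alpha := (alpha_phi psi (- psi)).
Local Notation beta := (beta_phi psi (- psi)).

Lemma alpha_psiE v : alpha v = 1%:M - e^T *m v *m nu.
Proof.
rewrite /alpha_phi [in ursubmx _]psi_block opp_block_mx block_mxKur.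
by rewrite linearN /= !mulNmx.
Qed.

Lemma beta_psiE v : beta v = 1%:M + nu *m v^T *m e.
Proof.
rewrite /beta_phi [in drsubmx (- _)]psi_block [in ursubmx _]psi_block.
by rewrite opp_block_mx block_mxKdr block_mxKur !mulNmx mulmxN opprK.
Qed.

Lemma trmx_alpha v : (alpha v)^T = beta v.
Proof.
by rewrite alpha_psiE beta_psiE linearB /= trmx1 !trmx_mul trmxK trmx_nu mulNmx mulmxA opprK.
Qed.

Lemma alphaK v : alpha v *m alpha (- v) = 1%:M.
Proof.
rewrite !alpha_psiE mulmxN mulNmx opprK; set X := e^T *m v *m nu.
have X2 : X *m X = 0 by rewrite /X -!mulmxA (mulmxA nu) nu_mul_tr_e !(mul0mx, mulmx0).
by rewrite mulmxBl mul1mx mulmxDr mulmx1 X2 addr0 addrK.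
Qed.

Lemma betaK v : beta v *m beta (- v) = 1%:M.
Proof.
by rewrite -!trmx_alpha -trmx_mul -{2}[v]opprK alphaK trmx1.
Qed.

Lemma inv_psi_uniq phiinv : psi *m phiinv = 1%:M -> phiinv = - psi.
Proof.
move=> psi_phiinv; rewrite -[phiinv]mul1mx -[1%:M](opprK) -psi_sqr mulNmx -mulmxA.
by rewrite psi_phiinv mulmx1.
Qed.

Lemma Ephi_genP s :
  (exists phiinv, psi *m phiinv = 1%:M /\ phiinv *m psi = 1%:M /\
     exists v, s = alpha_phi psi phiinv v \/ s = beta_phi psi phiinv v)
  <-> exists v, s = alpha v \/ s = beta v.
Proof.
split=> [[phiinv [/inv_psi_uniq -> [_ //]]] | gen_s].
by exists (- psi); rewrite mulmxN mulNmx psi_sqr opprK.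
Qed.

Lemma Ephi_beta v : E_phi psi (beta v).
Proof. by apply/gen_grp_gen/Ephi_genP; exists v; right. Qed.

Lemma Ephi_tr A : E_phi psi A -> E_phi psi A^T.
Proof.
apply: gen_grp_tr => _ /Ephi_genP [v [->|->]]; apply/Ephi_genP; exists v.
  by right; rewrite trmx_alpha.
by left; rewrite -trmx_alpha trmxK.
Qed.

Lemma Ephi_inv A :
  E_phi psi A -> exists B, [/\ E_phi psi B, A *m B = 1%:M & B *m A = 1%:M].
Proof.
apply: gen_grp_inv => _ /Ephi_genP [v [->|->]].
  by exists (alpha (- v)); rewrite alphaK -{2}[v]opprK alphaK.
by exists (beta (- v)); rewrite betaK -{2}[v]opprK betaK.
Qed.

(* beta (- (nu u))^T = 1 + (1 - e^T e) u e, and e u = u_0 = 0. *)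
Lemma Ephi_col (u : 'cV[R]_m) : u 0 0 = 0 -> E_phi psi (1%:M + u *m e).
Proof.
move=> u00; have eu : e *m u = 0.
  by rewrite -rowE; apply/matrixP => i j; rewrite !mxE (ord1 j).
suff -> : 1%:M + u *m e = beta (- (nu *m u))^T by apply: Ephi_beta.
by rewrite beta_psiE trmxK mulmxN !mulmxA nu_sqr mulmxBl mul1mx -!mulmxA eu mulmx0 sub0r opprK.
Qed.

Local Notation e0c := (delta_mx ord0 0 : 'cV[R]_N).
Local Notation e1r := (delta_mx 0 (sg ord0) : 'rV[R]_N).
Local Notation e0r := (delta_mx 0 ord0 : 'rV[R]_N).

Definition Xr (w : 'rV[R]_N) : 'M[R]_N := 1%:M + e0c *m w.
Definition Xc (u : 'cV[R]_N) : 'M[R]_N := 1%:M + u *m e0r.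

(* Xsp w is the symplectic matrix with first row e_0 + w (for w_0 = 0) that
   differs from the identity only in row 0 and column 1; spc w is that column. *)
Definition spc (w : 'I_N -> R) : 'cV[R]_N :=
  \col_a ((1 < a)%N%:R * ((-1) ^+ a * w (sg a))).

Definition Xsp (w : 'I_N -> R) : 'M[R]_N := Xr (\row_b w b) + spc w *m e1r.

Lemma XspE w a b :
  Xsp w a b = (a == b)%:R + (a == ord0)%:R * w b + (b == sg ord0)%:R * spc w a 0.
Proof.
rewrite /Xsp /Xr !mxE !big_ord1 !mxE eqxx /= !andbT; congr (_ + _ + _).
by rewrite mulrC.
Qed.

Lemma mul_XspE w (B : 'M[R]_N) a b :
  (Xsp w *m B) a b = B a b + (a == ord0)%:R * (\sum_c w c * B c b) + spc w a 0 * B (sg ord0) b.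
Proof.
rewrite /Xsp /Xr !mulmxDl mul1mx -!mulmxA -rowE !mxE !big_ord1 !mxE eqxx andbT.
by under eq_bigr do rewrite mxE.
Qed.

Lemma seE i j c b (z : R) :
  se i j z c b = (c == b)%:R + (c == i)%:R * ((b == j)%:R * z) -
    (i != sgm j :> nat)%:R * ((c == sg j)%:R * ((b == sg i)%:R * ((-1) ^+ (i + j) * z))).
Proof.
rewrite mxE -!val_eqE /=.
case: (c == i :> nat); case: (b == j :> nat); rewrite /= ?(mul1r, mul0r, mulr0) //.
all: case: (i == sgm j :> nat); rewrite /= ?(mul1r, mul0r, mulr0) //.
all: by case: (c == sgm j :> nat); case: (b == sgm i :> nat); rewrite /= ?(mul1r, mul0r, mulr0).
Qed.

Lemma sum_mul_seE (w : 'I_N -> R) i j b (z : R) :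
  \sum_c w c * se i j z c b = w b + (b == j)%:R * (z * w i) -
    (i != sgm j :> nat)%:R * ((b == sg i)%:R * ((-1) ^+ (i + j) * z * w (sg j))).
Proof.
under eq_bigr do rewrite seE mulrBr mulrDr mulrCA.
rewrite sumrB big_split /= sum_kronecker_r sum_kronecker_l.
under [X in _ - X]eq_bigr do rewrite mulrCA [w _ * _]mulrCA.
by rewrite -mulr_sumr sum_kronecker_l; ring.
Qed.

Lemma Xsp_mul_se w k z : w ord0 = 0 -> k != ord0 ->
  Xsp w *m se ord0 k z =
  Xsp (fun b => w b + (b == k)%:R * z -
         (b == sg ord0)%:R * ((1 < k)%N%:R * ((-1) ^+ k * z * w (sg k)))).
Proof.
move=> w0 k0; apply/matrixP => a b.
have k1 : ((ord0 : 'I_N) != sgm k :> nat) = (1 < k)%N.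
  by move: k0; rewrite eq_sgmC -val_eqE /= /sgm /=; lia.
rewrite mul_XspE sum_mul_seE !seE [RHS]XspE !mxE w0 k1 add0n mulr0 sg_neq.
have /negbTE k0' : ord0 != k by rewrite eq_sym.
rewrite !(inj_eq (can_inj sgK)) k0' [sg a == k]eq_sym eq_sgC [sg ord0 == b]eq_sym.
case: (k =P sg a) => [ka|_]; last by case: (a =P ord0) => [->|_] /=; ring.
have -> : a = sg k by rewrite ka sgK.
rewrite /= gt1_sgm signr_sgm sgK ?eqxx.
case gt1_k: (1 < k)%N; last by rewrite /=; ring.
have -> : (sg k == ord0) = false by rewrite eq_sym eq_sgC -val_eqE gtn_eqF.
by rewrite /=; ring.
Qed.

Lemma Xsp_mul_se1 w z : w ord0 = 0 ->
  Xsp w *m se ord0 (sg ord0) z = Xsp (fun b => w b + (b == sg ord0)%:R * z).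
Proof.
move=> w0; rewrite Xsp_mul_se ?sg_neq //; apply/matrixP => a b.
by rewrite !XspE !mxE /= !mul0r !mulr0 !subr0.
Qed.

Lemma eq_Xsp w w' : w =1 w' -> Xsp w = Xsp w'.
Proof. by move=> eq_w; apply/matrixP => a b; rewrite !XspE !mxE !eq_w. Qed.

Lemma Xsp0 : Xsp (fun=> 0) = 1%:M.
Proof. by apply/matrixP => a b; rewrite XspE !mxE !mulr0 !addr0. Qed.

(* Induction on the support of w: multiplying by se_0k(w_k) adds w_k at k and
   disturbs entry 1, which se_01 then repairs. *)
Lemma Xsp_ESp_bounded d w : w ord0 = 0 ->
  (forall b : 'I_N, (d < b)%N -> w b = 0) -> ESp_grp (Xsp w).
Proof.
elim: d w => [|d IH] w w0 w_d.
  rewrite (@eq_Xsp _ (fun=> 0)) ?Xsp0; first exact: gen_one.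
  by move=> b; case: (b =P ord0) => [->|/eqP]; rewrite // -val_eqE -lt0n => /w_d.
have [ltdN|leNd] := ltnP d.+1 N; last first.
  by apply: IH => // b ltdb; have := ltn_ord b; lia.
set k := Ordinal ltdN; have k0 : k != ord0 by rewrite -val_eqE.
set v := fun b => if b == k then 0 else w b.
have Ev : ESp_grp (Xsp v).
  apply: IH => [|b ltdb]; rewrite /v; case: eqP => // /eqP.
  by rewrite -val_eqE /= => neq_bk; apply: w_d; lia.
set c := (1 < k)%N%:R * ((-1) ^+ k * w k * v (sg k)).
have -> : Xsp w = Xsp v *m se ord0 k (w k) *m se ord0 (sg ord0) c.
  have v0 : v ord0 = 0 by rewrite /v; case: eqP.
  rewrite Xsp_mul_se // Xsp_mul_se1; last by rewrite v0 -!val_eqE /=; ring.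
  apply: eq_Xsp => b; rewrite /c /v.
  by case: (b =P k) => [->|_]; rewrite ?eqxx /=; ring.
by apply: gen_grp_mul; [apply: gen_grp_mul Ev _|]; apply: ESp_se; rewrite // eq_sym sg_neq.
Qed.

Lemma Xsp_ESp w : w ord0 = 0 -> ESp_grp (Xsp w).
Proof. by move=> w0; apply: (@Xsp_ESp_bounded N) => // b; have := ltn_ord b; lia. Qed.

Lemma e1r_row : e1r = row_mx 0 e.
Proof.
have -> : sg ord0 = rshift 1 (0 : 'I_m) by apply: val_inj.
exact: (@delta_mx_rshift R 1 1 m 0 0).
Qed.

Lemma e1r_e0c : e1r *m e0c = 0.
Proof. by rewrite mul_delta_mx_0 ?sg_neq. Qed.

Lemma e1r_spc w : e1r *m spc w = 0.
Proof. by rewrite -rowE; apply/matrixP => i j; rewrite !mxE mul0r. Qed.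

Lemma perp1_colE (g : 'cV[R]_N) :
  g ord0 0 = 0 -> perp1 (1%:M + dsubmx g *m e) = 1%:M + g *m e1r.
Proof.
move=> g0; have ug : usubmx g = 0.
  apply/matrixP => i j; rewrite !mxE (ord1 j).
  by have -> : lshift m i = ord0 by apply: val_inj; rewrite /= (ord1 i).
rewrite /perp1 -[g in RHS]vsubmxK ug e1r_row mul_col_row !mul0mx mulmx0.
by rewrite [1%:M in RHS]scalar_mx_block add_block_mx !addr0.
Qed.

Definition decomposable (A : 'M[R]_N) : Prop :=
  exists tau s, [/\ E_phi psi tau, ESp_grp s & A = perp1 tau *m s].

Lemma Xr_decomposable (w : 'rV[R]_N) : w 0 ord0 = 0 -> decomposable (Xr w).
Proof.
move=> w0; set g := spc (w 0).
exists (1%:M + dsubmx (- g) *m e), (Xsp (w 0)); split.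
- by apply: Ephi_col; rewrite !mxE /= mul0r oppr0.
- exact: Xsp_ESp.
rewrite perp1_colE; last by rewrite !mxE mul0r oppr0.
have -> : Xsp (w 0) = Xr w + g *m e1r.
  by rewrite /Xsp; congr (Xr _ + _); apply/matrixP => i j; rewrite mxE (ord1 i).
rewrite mulNmx mulmxBl mul1mx -!mulmxA !mulmxDr mulmx1 (mulmxA e1r) e1r_e0c.
by rewrite (mulmxA e1r) e1r_spc !(mul0mx, mulmx0) !addr0 addrK.
Qed.

Lemma spc_add_e1r (w : 'rV[R]_N) (c : 'M[R]_1) : spc ((w + c *m e1r) 0) = spc (w 0).
Proof.
apply/matrixP => a i; rewrite !mxE big_ord1 !mxE (inj_eq (can_inj sgK)).
by case: (a =P ord0) => [->|_]; rewrite ?mul0r //= mulr0 addr0.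
Qed.

Lemma Xr_Xsp_mul (w : 'rV[R]_N) :
  let h := spc (w 0) in Xr w = Xsp ((w + (w *m h) *m e1r) 0) *m (1%:M - h *m e1r).
Proof.
move=> h; rewrite /Xsp spc_add_e1r -/h.
have -> : \row_b (w + w *m h *m e1r) 0 b = w + w *m h *m e1r.
  by apply/matrixP => i j; rewrite [LHS]mxE (ord1 i).
have e1r_h : e1r *m h = 0 by apply: e1r_spc.
rewrite /Xr mulmxBr !(mulmxDl, mulmxDr, mul1mx, mulmx1) -!mulmxA !(mulmxA e1r h) e1r_h.
by rewrite !(mul0mx, mulmx0, addr0) opprD !addrA !addrK.
Qed.

(* (Xc u)^T = Xr u^T, factored by Xr_Xsp_mul with the E_psi part on the right. *)
Lemma Xc_decomposable (u : 'cV[R]_N) : u ord0 0 = 0 -> decomposable (Xc u).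
Proof.
move=> u0; set h := spc (u^T 0); set w := (u^T + (u^T *m h) *m e1r) 0.
have h0 : (- h) ord0 0 = 0 by rewrite !mxE mul0r oppr0.
exists (1%:M + dsubmx (- h) *m e)^T, (Xsp w)^T; split.
- by apply/Ephi_tr/Ephi_col; rewrite !mxE /= mul0r oppr0.
- apply/ESp_tr/Xsp_ESp; rewrite /w !mxE big_ord1 !mxE u0.
  by rewrite [_ == sg _]eq_sym sg_neq andbF mulr0 addr0.
rewrite -trmx_perp1 perp1_colE // -trmx_mul mulNmx /w /h -Xr_Xsp_mul /Xr /Xc.
by rewrite linearD /= trmx1 trmx_mul trmxK trmx_delta.
Qed.

Lemma decomposable1 : decomposable 1%:M.
Proof.
by exists 1%:M, 1%:M; split; [apply: gen_one | apply: gen_one | rewrite perp1_1 mulmx1].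
Qed.

Lemma decomposable_mulXr (w : 'rV[R]_N) A :
  w 0 ord0 = 0 -> decomposable A -> decomposable (Xr w *m A).
Proof.
move=> w0 [t [s [Et Es ->]]].
have [|t1 [s1 [Et1 Es1 Xr_wt]]] := @Xr_decomposable (w *m perp1 t); first by rewrite perp1_row00.
have -> : Xr w *m (perp1 t *m s) = perp1 t *m Xr (w *m perp1 t) *m s.
  by rewrite /Xr mulmxA mulmxDl mulmxDr mul1mx mulmx1 !mulmxA perp1_e0c.
exists (t *m t1), (s1 *m s); split; try exact: gen_grp_mul.
by rewrite Xr_wt !mulmxA perp1_mul.
Qed.

Lemma decomposable_mulXc (u : 'cV[R]_N) A :
  u ord0 0 = 0 -> decomposable A -> decomposable (Xc u *m A).
Proof.
move=> u0 [t [s [Et Es ->]]]; have [t' [_ tt' _]] := Ephi_inv Et.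
have [|t1 [s1 [Et1 Es1 Xc_tu]]] := @Xc_decomposable (perp1 t' *m u); first by rewrite perp1_col00.
have -> : Xc u *m (perp1 t *m s) = perp1 t *m Xc (perp1 t' *m u) *m s.
  rewrite /Xc mulmxA mulmxDl mulmxDr mul1mx mulmx1 -!mulmxA e0r_perp1.
  by rewrite !mulmxA perp1_mul tt' perp1_1 mul1mx.
exists (t *m t1), (s1 *m s); split; try exact: gen_grp_mul.
by rewrite Xc_tu !mulmxA perp1_mul.
Qed.

Lemma decomposable_mulelem (i j : 'I_N) (l : R) A :
  i != j -> decomposable A -> decomposable (elem i j l *m A).
Proof.
have elem0j k c B : k != ord0 -> decomposable B -> decomposable (elem ord0 k c *m B).
  move=> k0; have -> : elem ord0 k c = Xr (c *: delta_mx 0 k).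
    by rewrite /elem /Xr -scalemxAr mul_delta_mx.
  by apply: decomposable_mulXr; rewrite !mxE eq_sym (negbTE k0) mulr0.
have elemk0 k c B : k != ord0 -> decomposable B -> decomposable (elem k ord0 c *m B).
  move=> k0; have -> : elem k ord0 c = Xc (c *: delta_mx k 0).
    by rewrite /elem /Xc -scalemxAl mul_delta_mx.
  by apply: decomposable_mulXc; rewrite !mxE eq_sym (negbTE k0) mulr0.
move=> neq_ij DA; have [i0 | i0] := eqVneq i ord0.
  by move: neq_ij; rewrite i0 eq_sym => j0; apply: elem0j.
have [j0 | j0] := eqVneq j ord0; first by rewrite j0; apply: elemk0.
rewrite (elem_commutator l neq_ij i0 j0) -!mulmxA.
by apply: (elemk0) => //; apply: (elem0j) => //; apply: (elemk0) => //; apply: elem0j.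
Qed.

Lemma E_grp_decomposable A : E_grp A -> decomposable A.
Proof.
elim=> [|_ B [i [j [l [neq_ij ->]]]] _ DB|_ s' B [i [j [l [neq_ij ->]]]] _ s'e _ DB].
- exact: decomposable1.
- exact: decomposable_mulelem.
have -> : s' = elem i j (- l) by rewrite -[s']mulmx1 -(elemK l neq_ij) mulmxA s'e mul1mx.
exact: decomposable_mulelem.
Qed.

End StandardForm.

Unset Implicit Arguments.

Theorem lemma4p3 (R : comPzRingType) (n : nat) (hn : (2 <= n)%N)
  (eps : 'M[R]_(1 + (n.*2).-1)) :
  E_grp eps ->
  exists rho : 'M[R]_((n.*2).-1),
    E_phi (psi R (1 + (n.*2).-1)) rho /\ ESp_grp (perp1 rho *m eps).
Proof.
case: n hn eps => [|[|p]] // _ eps /(@E_grp_decomposable R p.+1) [t [s [Et Es ->]]].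
have [t' [Et' _ t't]] := Ephi_inv Et.
by exists t'; split; rewrite // mulmxA perp1_mul t't perp1_1 mul1mx.
Qed.
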